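(* Let $A=\{a_1^{k_1},\ldots,a_n^{k_n}\}$ be a multiset, let $m\ge 0$ be an integer, let $r=\max(k_1,\ldots,k_n)$ and $s=\min(m,r)$. Let $\Lambda_m(A)$ be the set of all tuples $(\lambda_1,\ldots,\lambda_s)$ of non-negative integers satisfying $$\sum_{i=1}^s i\lambda_i=m \quad\text{and}\quad \sum_{i=j}^s\lambda_i\le \overline{k_j}\ \ \text{for } j=1,\ldots,s.$$ Then $$|C_m(A)|=\sum_{(\lambda_1,\ldots,\lambda_s)\in\Lambda_m(A)}\ \prod_{j=1}^s\binom{\overline{k_j}-\sum_{i=j+1}^s\lambda_i}{\lambda_j},$$ where an empty sum $\sum_{i=s+1}^s\lambda_i$ is $0$.
   Context: A multiset $A=\{a_1^{k_1},\ldots,a_n^{k_n}\}$ consists of distinct elements $a_1,\ldots,a_n$ with positive integer multiplicities $k_1,\ldots,k_n$; its cardinality is $|A|=k_1+\cdots+k_n$. A submultiset of $A$ is a multiset $\{a_1^{r_1},\ldots,a_n^{r_n}\}$ with integers $0\le r_i\le k_i$ (elements with $r_i=0$ being absent), of cardinality $r_1+\cdots+r_n$. $C_m(A)$ denotes the set of all submultisets of $A$ of cardinality $m$. For each integer $j\ge1$, $\overline{k_j}=|\{i\in\{1,\ldots,n\}: k_i\ge j\}|$ (the adjoint specification of $A$). *)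

(* A multiset {a_1^{k_1},...,a_n^{k_n}} is represented by its
   multiplicity function k : 'I_n -> nat (the elements a_i are the indices i). *)
From mathcomp Require Import all_boot.
Set Implicit Arguments. Unset Strict Implicit. Unset Printing Implicit Defensive.

Definition maxmult (n : nat) (k : 'I_n -> nat) : nat := \max_(i < n) k i.

(* C_m(A): submultisets {a_1^{r_1},...,a_n^{r_n}}, 0 <= r_i <= k_i, of
   cardinality m; a submultiset is its multiplicity vector (r_i), whose
   entries are bounded by max k_i, hence stored in 'I_(maxmult k).+1. *)
Definition Csub (n : nat) (k : 'I_n -> nat) (m : nat)
  : {set {ffun 'I_n -> 'I_(maxmult k).+1}} :=
  [set f : {ffun 'I_n -> 'I_(maxmult k).+1} | [forall i, (f i <= k i)%N] && (\sum_(i < n) (f i : nat) == m)].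

Definition kbar (n : nat) (k : 'I_n -> nat) (j : nat) : nat :=
  #|[set i : 'I_n | j <= k i]|.

Definition sidx (n : nat) (k : 'I_n -> nat) (m : nat) : nat := minn m (maxmult k).

(* Lambda_m(A): tuples (lambda_1,...,lambda_s); we index by t : 'I_s with
   lambda_{t+1} = l t. Entries are bounded by m (since sum i*lambda_i = m),
   so they are stored in 'I_m.+1 without loss. *)
Definition Lambda (n : nat) (k : 'I_n -> nat) (m : nat)
  : {set {ffun 'I_(sidx k m) -> 'I_m.+1}} :=
  [set l : {ffun 'I_(sidx k m) -> 'I_m.+1} | (\sum_(i < sidx k m) i.+1 * l i == m)
        && [forall j : 'I_(sidx k m),
              (\sum_(i < sidx k m | (j <= i)%N) (l i : nat)) <= kbar k j.+1]].

From mathcomp Require Import all_boot.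
Set Implicit Arguments. Unset Strict Implicit. Unset Printing Implicit Defensive.

(* A submultiset of A = {a_1^{k_1},...,a_n^{k_n}} is a function f with
   f i <= k i.  Its profile is (lambda_1,...,lambda_s), where lambda_j is the
   number of elements taken exactly j times; the identities
   sum_i f i = sum_j j * lambda_j and #{i | f i > j} = sum_(i > j) lambda_i
   show that the profile of an element of C_m(A) lies in Lambda_m(A).

   The heart of the proof is a general count on a finite type T with
   capacities k : the functions g <= k with values <= t and prescribed level
   sizes lambda_1..lambda_t number
      prod_(j <= t) C(kbar_j - sum_(i > j) lambda_i, lambda_j).
   By induction on t: the top level S = g^-1(t) is any lambda_t-subset of
   {i | k i >= t}, and erasing it leaves a function of the same kind for
   t - 1 and the capacities k with S set to 0, whose adjoint specification
   is kbar_j - lambda_t.  Summing these fibre counts over the profiles in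
   Lambda_m(A) gives the theorem. *)

Lemma value_by_position s v : v <= s -> \sum_(j < s) (v == j.+1) * j.+1 = v.
Proof.
case: v => [|v] vs; first by rewrite big1.
rewrite (bigD1 (Ordinal vs)) //= eqxx mul1n big1 ?addn0 // => j.
by rewrite -val_eqE /= eqSS eq_sym => /negbTE ->.
Qed.

Lemma tail_indicator s v j :
  v <= s -> \sum_(i < s | j <= i) (v == i.+1 : nat) = (j < v).
Proof.
case: v => [|v] vs; first by rewrite big1.
have [jv | vj] := leqP j v.
  rewrite (bigD1 (Ordinal vs)) //= eqxx big1 ?addn0 ?ltnS ?jv // => i /andP[_].
  by rewrite -val_eqE /= eqSS eq_sym => /negbTE ->.
rewrite big1 ?ltnS ?(leqNgt j v) ?vj // => i ji; rewrite eqSS; case: eqP => // e.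
by move: ji; rewrite -e leqNgt vj.
Qed.

Section Levels.
Variables (T : finType) (B : nat).
Implicit Types (g : {ffun T -> 'I_B}).

Definition level g (j : nat) : {set T} := [set i | (g i : nat) == j].

Lemma card_level g j : #|level g j| = \sum_i ((g i : nat) == j).
Proof. by rewrite -sum1dep_card big_mkcond; apply: eq_bigr => i _; case: eqP. Qed.

Lemma sum_by_levels g s : (forall i, g i <= s) ->
  \sum_i (g i : nat) = \sum_(j < s) j.+1 * #|level g j.+1|.
Proof.
move=> gs; under eq_bigr => i _ do rewrite -(value_by_position (gs i)).
rewrite exchange_big; apply: eq_bigr => j _.
by rewrite -big_distrl mulnC card_level.
Qed.

Lemma tail_levels g s j : (forall i, g i <= s) ->
  \sum_(i < s | j <= i) #|level g i.+1| = #|[set x | j < g x]|.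
Proof.
move=> gs; under eq_bigr => i _ do rewrite card_level.
rewrite exchange_big /= -sum1dep_card [RHS]big_mkcond; apply: eq_bigr => x _.
by rewrite tail_indicator //; case: ltnP.
Qed.

Lemma card_level_le g s (j : 'I_s) : (forall i, g i <= s) ->
  #|level g j.+1| <= \sum_i (g i : nat).
Proof.
move=> gs; rewrite (sum_by_levels gs) (bigD1 j) //=.
exact: leq_trans (leq_pmull _ _) (leq_addr _ _).
Qed.

End Levels.

Section TypeCount.
Variables (T : finType) (B : nat) (lam : nat -> nat).
Implicit Types (k : T -> nat) (g : {ffun T -> 'I_B}) (S : {set T}).

Definition above k j : {set T} := [set i | j <= k i].

Definition of_type k t g : bool :=
  [forall i, (g i <= k i) && (g i <= t)] &&
  all (fun j => #|level g j.+1| == lam j) (iota 0 t).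

Definition type_count k t : nat :=
  \prod_(j < t) 'C(#|above k j.+1| - \sum_(i < t | j < i) lam i, lam j).

(* The first t factors of type_count k t.+1; it is also the count left
   after the top level has been removed (type_count_cap). *)
Definition lower_count k t : nat :=
  \prod_(j < t) 'C(#|above k j.+1| - \sum_(i < t.+1 | j < i) lam i, lam j).

Lemma type_count_S k t :
  type_count k t.+1 = 'C(#|above k t.+1|, lam t) * lower_count k t.
Proof.
rewrite /type_count big_ord_recr /= mulnC big1 ?subn0 // => i.
by rewrite ltnNge -ltnS ltn_ord.
Qed.

Definition cap k S : T -> nat := fun i => if i \in S then 0 else k i.

Lemma above_cap k S j : above (cap k S) j.+1 = above k j.+1 :\: S.
Proof. by apply/setP => i; rewrite !inE /cap; case: (i \in S). Qed.

(* Removing a lam t-subset S of the points of capacity >= t.+1 lowers every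
   kbar_j (j <= t.+1) by lam t, which turns type_count into lower_count. *)
Lemma type_count_cap k t S :
  S \subset above k t.+1 -> #|S| = lam t -> type_count (cap k S) t = lower_count k t.
Proof.
move=> sS cS; apply: eq_bigr => j _.
have sSj : S \subset above k j.+1.
  apply: subset_trans sS _; apply/subsetP => i; rewrite !inE; apply: leq_trans.
  exact: leqW.
rewrite above_cap cardsD (setIidPr sSj) cS.
rewrite [in RHS]big_mkcond big_ord_recr /= ltn_ord -big_mkcond /=.
by rewrite addnC subnDA.
Qed.

Lemma all_iota_last (P : pred nat) t : all P (iota 0 t.+1) = all P (iota 0 t) && P t.
Proof. by rewrite -addn1 iotaD all_cat /= andbT. Qed.

Definition set_on S (v : 'I_B) g : {ffun T -> 'I_B} :=
  [ffun i => if i \in S then v else g i].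

Lemma level_set_on S (v : 'I_B) g j :
  (v : nat) != j -> (forall i, i \in S -> (g i : nat) != j) ->
  level (set_on S v g) j = level g j.
Proof.
move=> vj gj; apply/setP => i; rewrite !inE ffunE.
by case: ifP => // iS; rewrite (negbTE vj) (negbTE (gj i iS)).
Qed.

Lemma of_type_vanish k t S g i : of_type (cap k S) t g -> i \in S -> (g i : nat) = 0.
Proof.
case/andP => /forallP/(_ i) /andP[gk _] _ iS.
by apply/eqP; rewrite -leqn0; move: gk; rewrite /cap iS.
Qed.

Lemma of_type_raise k t S g (top : 'I_B) : top = t.+1 :> nat ->
  S \subset above k t.+1 -> #|S| = lam t -> of_type (cap k S) t g ->
  of_type k t.+1 (set_on S top g) && (level (set_on S top g) t.+1 == S).
Proof.
move=> topE sS cS gT; have g0 := of_type_vanish gT.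
case/andP: gT => /forallP gb /allP gl.
have levS : level (set_on S top g) t.+1 = S.
  apply/setP => i; rewrite inE ffunE; case: ifP => iS; first by rewrite topE eqxx.
  by have /andP[_ gt] := gb i; rewrite ltn_eqF // ltnS.
rewrite levS eqxx andbT; apply/andP; split.
- apply/forallP => i; rewrite ffunE; case: ifP => iS.
    by rewrite topE leqnn andbT; have := subsetP sS i iS; rewrite inE.
  by have /andP[] := gb i; rewrite /cap iS => -> /leqW.
- rewrite all_iota_last levS cS eqxx andbT.
  apply/allP => j; rewrite mem_iota add0n => /andP[_ jt].
  rewrite level_set_on; first by apply: gl; rewrite mem_iota add0n jt.
    by rewrite topE eqSS gtn_eqF.
  by move=> i /g0 ->.
Qed.

Lemma of_type_lower k t S g (zero : 'I_B) : zero = 0 :> nat ->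
  of_type k t.+1 g -> level g t.+1 = S -> of_type (cap k S) t (set_on S zero g).
Proof.
move=> zeroE /andP[/forallP gb]; rewrite all_iota_last => /andP[/allP gl _] levS.
have inS i : (i \in S) = (g i == t.+1 :> nat) by rewrite -levS inE.
apply/andP; split.
- apply/forallP => i; rewrite ffunE /cap; case: ifP => iS; first by rewrite zeroE.
  by have /andP[-> gt] := gb i; rewrite -ltnS ltn_neqAle gt -inS iS.
- apply/allP => j jt; rewrite level_set_on ?zeroE ?gl // => i.
  by rewrite inS => /eqP ->; rewrite eqSS gtn_eqF //; move: jt; rewrite mem_iota.
Qed.

Lemma card_fibre k t S : t.+1 < B -> S \subset above k t.+1 -> #|S| = lam t ->
  #|[set g | of_type k t.+1 g & level g t.+1 == S]| =
  #|[set g | of_type (cap k S) t g]|.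
Proof.
move=> ltB sS cS; pose top := Ordinal ltB.
pose zero := Ordinal (ltn_trans (ltn0Sn t) ltB).
have -> : [set g | of_type k t.+1 g & level g t.+1 == S] =
          set_on S top @: [set g | of_type (cap k S) t g].
  apply/setP => g; rewrite inE; apply/andP/imsetP => [[gT /eqP levS] | [h hT ->]].
  - exists (set_on S zero g); first by rewrite inE (of_type_lower (zero := zero)).
    apply/ffunP => i; rewrite !ffunE; case iS: (i \in S) => //; apply/val_inj.
    by move: iS; rewrite -levS inE => /eqP.
  - by rewrite inE in hT; apply/andP; apply: of_type_raise.
rewrite card_in_imset //; apply: (can_in_inj (g := set_on S zero)) => g.
rewrite inE => gT; apply/ffunP => i; rewrite !ffunE.
case iS: (i \in S) => //; apply/val_inj.
by rewrite /= (of_type_vanish gT iS).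
Qed.

(* The general count, by induction on t: partition by the top level S, which
   ranges over the lam t-subsets of above k t.+1. *)
Lemma card_of_type k t : t < B -> #|[set g | of_type k t g]| = type_count k t.
Proof.
elim: t k => [|t IH] k ltB.
  have -> : [set g | of_type k 0 g] = [set [ffun=> Ordinal ltB]].
    apply/setP => g; rewrite !inE; apply/andP/eqP => [[/forallP g0 _] | ->].
    - apply/ffunP => i; rewrite ffunE; apply/val_inj => /=.
      by have /andP[_] := g0 i; rewrite leqn0 => /eqP.
    - by split=> //; apply/forallP => i; rewrite ffunE.
  by rewrite cards1 /type_count big_ord0.
pose draws := [set S : {set T} | S \subset above k t.+1 & #|S| == lam t].
rewrite -sum1dep_card (partition_big (fun g => level g t.+1) (mem draws)) /=; last first.
  move=> g /andP[/forallP gb]; rewrite all_iota_last => /andP[_ /eqP cS].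
  rewrite inE cS eqxx andbT; apply/subsetP => i; rewrite !inE => /eqP gt.
  by have /andP[+ _] := gb i; rewrite gt.
rewrite (eq_bigr (fun=> lower_count k t)) => [|S]; last first.
  rewrite inE => /andP[sS /eqP cS].
  by rewrite sum1dep_card card_fibre // IH ?(ltnW ltB) // type_count_cap.
by rewrite sum_nat_const cards_draws type_count_S.
Qed.

End TypeCount.

Section Submultisets.
Variables (n : nat) (k : 'I_n -> nat) (m : nat).
Local Notation s := (sidx k m).
Implicit Types (f : {ffun 'I_n -> 'I_(maxmult k).+1}) (l : {ffun 'I_s -> 'I_m.+1}).

(* The profile lambda_j = #{i | f i = j}, j = 1..s, of a submultiset f;
   on C_m(A) its entries are the true level sizes (profileE). *)
Definition profile f : {ffun 'I_s -> 'I_m.+1} := [ffun j : 'I_s => inord #|level f j.+1|].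

Definition extend l (j : nat) : nat := oapp (fun i => l i : nat) 0 (insub j).

Lemma extendE l (j : 'I_s) : extend l j = l j.
Proof. by rewrite /extend valK. Qed.

Lemma Csub_le_sidx f : f \in Csub k m -> forall i, f i <= s.
Proof.
rewrite inE => /andP[/forallP fk /eqP fm] i; rewrite leq_min; apply/andP; split.
  by rewrite -fm (bigD1 i) //= leq_addr.
exact: leq_trans (fk i) (leq_bigmax i).
Qed.

Lemma profileE f (j : 'I_s) : f \in Csub k m -> profile f j = #|level f j.+1| :> nat.
Proof.
move=> fC; have fs := Csub_le_sidx fC; move: fC; rewrite inE => /andP[_ /eqP fm].
by rewrite ffunE inordK // ltnS -[X in _ <= X]fm card_level_le.
Qed.

Lemma profile_Lambda f : f \in Csub k m -> profile f \in Lambda k m.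
Proof.
move=> fC; have fs := Csub_le_sidx fC; move: (fC); rewrite inE => /andP[_ /eqP fm].
rewrite inE; apply/andP; split.
  apply/eqP; rewrite -[RHS]fm (sum_by_levels fs).
  by apply: eq_bigr => j _; rewrite profileE.
apply/forallP => j; under eq_bigr => i _ do rewrite profileE //.
rewrite (tail_levels _ fs) /kbar; apply: subset_leq_card; apply/subsetP => x.
by rewrite !inE => /leq_trans; apply; move: fC; rewrite inE => /andP[/forallP].
Qed.

Lemma fibre_profile l : l \in Lambda k m ->
  [set f | (f \in Csub k m) && (profile f == l)] = [set g | of_type (extend l) k s g].
Proof.
rewrite inE => /andP[/eqP lm _]; apply/setP => f; rewrite [LHS]inE [RHS]inE.
apply/idP/idP.
- case/andP => fC /eqP <-; have fs := Csub_le_sidx fC.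
  move: (fC); rewrite inE => /andP[/forallP fk _].
  apply/andP; split; first by apply/forallP => i; rewrite fk fs.
  apply/allP => j; rewrite mem_iota add0n => /andP[_ js].
  by rewrite -[j]/(Ordinal js : nat) extendE profileE.
- case/andP => /forallP fb /allP fl.
  have fs i : f i <= s by case/andP: (fb i).
  have levl (j : 'I_s) : #|level f j.+1| = l j.
    by rewrite -extendE; apply/eqP/fl; rewrite mem_iota add0n ltn_ord.
  have fm : \sum_i (f i : nat) = m.
    by rewrite (sum_by_levels fs) -[RHS]lm; apply: eq_bigr => j _; rewrite levl.
  have fC : f \in Csub k m.
    by rewrite inE fm eqxx andbT; apply/forallP => i; case/andP: (fb i).
  by rewrite fC; apply/eqP/ffunP => j; apply/ord_inj; rewrite profileE // levl.
Qed.

Lemma type_count_extend l : type_count (extend l) k s =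
  \prod_(j < s) 'C(kbar k j.+1 - \sum_(i < s | j < i) (l i : nat), l j).
Proof.
apply: eq_bigr => j _; rewrite extendE; congr 'C(_ - _, _).
by apply: eq_bigr => i _; exact: extendE.
Qed.

End Submultisets.

Theorem theorem4p1 (n : nat) (k : 'I_n -> nat) (m : nat)
  (hk : forall i, 0 < k i) :
  #|Csub k m| =
  \sum_(l in Lambda k m)
     \prod_(j < sidx k m)
        'C(kbar k j.+1 - \sum_(i < sidx k m | (j < i)%N) (l i : nat), l j).
Proof.
have lt_s : sidx k m < (maxmult k).+1 by rewrite ltnS geq_minr.
rewrite -sum1_card (partition_big (@profile n k m) (mem (Lambda k m))); last first.
  exact: profile_Lambda.
apply: eq_bigr => l lL.
by rewrite sum1dep_card fibre_profile // card_of_type // type_count_extend.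
Qed.
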